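(* Let $X$ be a real Banach space with modulus of smoothness $\rho(u,X)\le\gamma u^q$ for all $u\ge0$, where $\gamma>0$ and $1<q\le2$; set $\mu(u):=\gamma u^q$ and $p:=\frac{q}{q-1}$. Let $t\in(0,1]$, $b\in(0,1]$, and $c:=(1-b)\left(\frac{b}{2\gamma}\right)^{\frac1{q-1}}$. Then for every $m\ge1$ and every $\alpha\in(0,1]$ with $\alpha\le \frac{t(1-b)}{1+t(1-b)}$, $$\gamma_m^{t,b,\mu}(\alpha,X)\le (1+mct^p)^{-\alpha/p},$$ and the same inequality holds for $\gamma_m^{t,b,\mu}(\alpha,X)^*$.
   Context: The modulus of smoothness is $\rho(u,X):=\sup_{\|x\|=\|y\|=1}\bigl(\tfrac12(\|x+uy\|+\|x-uy\|)-1\bigr)$. A (symmetric) dictionary is a set $\mathcal D\subset X$ of unit-norm elements with $\overline{\operatorname{span}}\,\mathcal D=X$ and $g\in\mathcal D\Rightarrow-g\in\mathcal D$. $A_1(\mathcal D)$ is the closed convex hull of $\mathcal D$, $\|f\|_{A_1(\mathcal D)}:=\inf\{M:f/M\in A_1(\mathcal D)\}$. For $f\ne0$, $F_f$ denotes a norming functional ($\|F_f\|=1$, $F_f(f)=\|f\|$; unique here since $X$ is uniformly smooth), and $r_{\mathcal D}(f):=\sup_{g\in\mathcal D}F_f(g)$. Dual Greedy Algorithm DGA$(t,b,\mu)$: $f_0:=f$, $G_0:=0$; if $f_{m-1}=0$ set $f_j=0$ for $j\ge m$ and stop; otherwise (1) take any $\varphi_m\in\mathcal D$ with $F_{f_{m-1}}(\varphi_m)\ge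 t\,r_{\mathcal D}(f_{m-1})$; (2) choose $c_m>0$ from $\|f_{m-1}\|\mu(c_m/\|f_{m-1}\|)=\frac{tb}{2}c_m r_{\mathcal D}(f_{m-1})$; (3) $f_m:=f_{m-1}-c_m\varphi_m$, $G_m^{t,b,\mu}:=G_{m-1}^{t,b,\mu}+c_m\varphi_m$. The modification DGA$(t,b,\mu)^*$ is identical except that in (2) $c_m>0$ solves $\|f_{m-1}\|\mu(c_m/\|f_{m-1}\|)=\frac b2 c_mF_{f_{m-1}}(\varphi_m)$. Define $$\gamma_m^{t,b,\mu}(\alpha,X):=\sup_{\mathcal D}\sup_f\sup_{G^{t,b,\mu}_m(f,\mathcal D)}\frac{\|f-G^{t,b,\mu}_m(f,\mathcal D)\|}{\|f\|^{1-\alpha}\|f\|_{A_1(\mathcal D)}^{\alpha}},$$ over all dictionaries, all $f\ne0$ with $\|f\|_{A_1(\mathcal D)}<\infty$, and all realizations of DGA$(t,b,\mu)$ after $m$ steps; $\gamma_m^{t,b,\mu}(\alpha,X)^*$ is the same quantity for DGA$(t,b,\mu)^*$. *)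

From HB Require Import structures.
From mathcomp Require Import all_boot all_order all_algebra.
From mathcomp Require Import all_classical all_reals all_analysis.
Set Implicit Arguments. Unset Strict Implicit. Unset Printing Implicit Defensive.
Import Order.TTheory GRing.Theory Num.Theory.
Import numFieldNormedType.Exports.
Local Open Scope classical_set_scope.
Local Open Scope ring_scope.

Section DGA.
Context {R : realType} {X : normedModType R}.

Definition mod_smooth (u : R) : R :=
  sup [set r | exists x y : X, `|x| = 1 /\ `|y| = 1 /\
         r = (`|x + u *: y| + `|x - u *: y|) / 2 - 1].

Definition span_set (D : set X) : set X :=
  [set v | exists (n : nat) (a : 'I_n -> R) (g : 'I_n -> X),
      (forall i, D (g i)) /\ v = \sum_(i < n) a i *: g i].

Definition dictionary (D : set X) : Prop :=
  [/\ forall g, D g -> `|g| = 1,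
      closure (span_set D) = setT &
      forall g, D g -> D (- g)].

Definition conv_hull (D : set X) : set X :=
  [set v | exists (n : nat) (a : 'I_n -> R) (g : 'I_n -> X),
      [/\ forall i, D (g i), forall i, 0 <= a i, \sum_(i < n) a i = 1 &
          v = \sum_(i < n) a i *: g i]].

Definition A1 (D : set X) : set X := closure (conv_hull D).

Definition A1_set (D : set X) (f : X) : set R :=
  [set M | 0 < M /\ A1 D (M^-1 *: f)].

Definition A1_finite (D : set X) (f : X) : Prop := A1_set D f !=set0.

(* ||f||_{A_1(D)} = inf {M : f/M in A_1(D)} (used only when A1_finite) *)
Definition A1_norm (D : set X) (f : X) : R := inf (A1_set D f).

(* F is a norming functional of f: ||F|| = 1 and F f = ||f|| (f <> 0) *)
Definition norming (F : {linear X -> R^o}) (f : X) : Prop :=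
  (forall x, `|F x| <= `|x|) /\ F f = `|f|.

Definition r_D (D : set X) (F : {linear X -> R^o}) : R := sup [set F g | g in D].

(* one step of DGA(t,b,mu) (star = false) or DGA(t,b,mu)^* (star = true),
   from (f_{m-1}, G_{m-1}) to (f_m, G_m) *)
Definition DGA_step (star : bool) (D : set X) (t b : R) (mu : R -> R)
  (fprev fnext Gprev Gnext : X) : Prop :=
  (fprev = 0 /\ fnext = 0 /\ Gnext = Gprev) \/
  (fprev <> 0 /\
   exists (F : {linear X -> R^o}) (phi : X) (c : R),
     [/\ norming F fprev, D phi, F phi >= t * r_D D F & 0 < c] /\
     [/\ `|fprev| * mu (c / `|fprev|) =
           (if star then b / 2 * c * F phi else t * b / 2 * c * r_D D F),
         fnext = fprev - c *: phi &
         Gnext = Gprev + c *: phi]).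

Definition DGA_realization (star : bool) (D : set X) (t b : R) (mu : R -> R)
  (f : X) (fs Gs : nat -> X) : Prop :=
  [/\ fs 0%N = f, Gs 0%N = 0 &
      forall m, DGA_step star D t b mu (fs m) (fs m.+1) (Gs m) (Gs m.+1)].

End DGA.

Definition gammaDGA {R : realType} (X : normedModType R) (star : bool)
  (t b : R) (mu : R -> R) (alpha : R) (m : nat) : \bar R :=
  ereal_sup [set r : \bar R | exists (D : set X) (f : X) (fs Gs : nat -> X),
     [/\ dictionary D, f <> 0, A1_finite D f,
         DGA_realization star D t b mu f fs Gs &
         r = (`|f - Gs m| /
                (powR `|f| (1 - alpha) * powR (A1_norm D f) alpha))%:E]].

From HB Require Import structures.
From mathcomp Require Import all_boot all_order all_algebra.
From mathcomp Require Import all_classical all_reals all_analysis.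
From mathcomp Require Import ring lra.
Import Order.TTheory GRing.Theory Num.Theory.
Import numFieldNormedType.Exports.
Local Open Scope classical_set_scope.
Local Open Scope ring_scope.
Set Implicit Arguments. Unset Strict Implicit.

(* Write A = |f|_A1, d = t(1-b), p = q/(q-1), a_k = |f_k| and r_k = r_D(f_k).
   Smoothness at f_k/a_k with step c_k/a_k, together with the equation defining
   c_k, gives the decrease a_(k+1) <= a_k - d c_k r_k and the step length bound
   c_k >= a_k kappa r_k^(p-1), where kappa = (tb/(2 gamma))^(1/(q-1)).
   With B_k = A + c_1 + ... + c_k one has a_k = F_(f_k)(f - G_k) <= B_k r_k.
   Hence a_k B_k^d never increases (as 1 - dx <= exp(-dx)), and y_k = (a_k/B_k)^p
   satisfies y_(k+1) <= y_k (1 - d kappa y_k), so y_k (1 + k d kappa) <= 1.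
   Interpolating a_m <= |f| (A/B_m)^d and a_m <= B_m (1 + m d kappa)^(-1/p)
   eliminates B_m as long as alpha <= d/(1+d); finally c t^p = d kappa. *)

Section NormingFunctionals.
Context {R : realType} {X : normedModType R}.

Definition contractive (F : {linear X -> R^o}) := forall x, `|F x| <= `|x|.

Lemma contractive_le F x : contractive F -> F x <= `|x|.
Proof. by move=> hF; exact: le_trans (ler_norm _) (hF x). Qed.

Lemma A1_norm_ge0 (D : set X) f : A1_finite D f -> 0 <= A1_norm D f.
Proof. by move=> hfin; apply: lb_le_inf => // M [/ltW]. Qed.

Variables (D : set X) (F : {linear X -> R^o}).
Hypotheses (D_unit : forall g, D g -> `|g| = 1) (F_contr : contractive F).

Lemma r_D_has_ubound : has_ubound [set F g | g in D].
Proof. by exists 1 => _ [g Dg <-]; rewrite -(D_unit Dg) contractive_le. Qed.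

Lemma le_r_D g : D g -> F g <= r_D D F.
Proof. by move=> Dg; apply: ub_le_sup; [exact: r_D_has_ubound | exists g]. Qed.

Lemma r_D_le1 g : D g -> r_D D F <= 1.
Proof.
move=> Dg; apply: ge_sup; first by exists (F g), g.
by move=> _ [h Dh <-]; rewrite -(D_unit Dh) contractive_le.
Qed.

Lemma le_r_D_A1 v : A1 D v -> F v <= r_D D F.
Proof.
move=> A1v; have hull_le w : conv_hull D w -> F w <= r_D D F.
  move=> [n [a [g [Dg a0 a1 ->]]]]; rewrite linear_sum /=.
  apply: le_trans (_ : \sum_(i < n) a i * r_D D F <= _).
    by apply: ler_sum => i _; rewrite linearZ ler_wpM2l ?le_r_D.
  by rewrite -mulr_suml a1 mul1r.
rewrite leNgt; apply/negP => hlt.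
have e0 : 0 < F v - r_D D F by rewrite subr_gt0.
have [w [hull_w]] := A1v _ (nbhsx_ballx v _ e0).
rewrite -ball_normE /= => vw.
have := @contractive_le F (v - w) F_contr; have := hull_le w hull_w.
rewrite linearB /=; lra.
Qed.

Lemma le_A1_norm_r_D f : A1_finite D f -> 0 <= r_D D F ->
  F f <= A1_norm D f * r_D D F.
Proof.
move=> hfin r0; have le_Mr M : A1_set D f M -> F f <= M * r_D D F.
  move=> [M0 /le_r_D_A1]; rewrite linearZ /= => h.
  by rewrite mulrC -ler_pdivrMr // mulrC.
have [r_eq0|r_neq0] := eqVneq (r_D D F) 0.
  by case: hfin => M /le_Mr; rewrite r_eq0 !mulr0.
have rp : 0 < r_D D F by rewrite lt_def r_neq0 r0.
rewrite -ler_pdivrMr //; apply: lb_le_inf => // M /le_Mr.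
by rewrite ler_pdivrMr.
Qed.

Hypothesis D_sym : forall g, D g -> D (- g).

Lemma norm_le_r_D g : D g -> `|F g| <= r_D D F.
Proof.
move=> Dg; have := le_r_D (D_sym Dg); rewrite linearN /= => h.
by rewrite ler_norml le_r_D // andbT lerNl.
Qed.

Lemma r_D_ge0 g : D g -> 0 <= r_D D F.
Proof. by move=> Dg; exact: le_trans (normr_ge0 _) (norm_le_r_D Dg). Qed.

End NormingFunctionals.

Lemma norm_le_A1_norm {R : realType} {X : normedModType R} (D : set X)
    (F : {linear X -> R^o}) f g :
  (forall g, D g -> `|g| = 1) -> (forall g, D g -> D (- g)) ->
  norming F f -> D g -> A1_finite D f -> `|f| <= A1_norm D f.
Proof.
move=> D_unit D_sym [F_contr <-] Dg f_fin.
have r0 := r_D_ge0 D_unit F_contr D_sym Dg.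
apply: le_trans (le_A1_norm_r_D D_unit F_contr f_fin r0) _.
by rewrite ler_piMr ?A1_norm_ge0 ?(r_D_le1 D_unit F_contr Dg).
Qed.

Section Smoothness.
Context {R : realType} {X : normedModType R}.

Lemma le_mod_smooth (x y : X) u : `|x| = 1 -> `|y| = 1 -> 0 <= u ->
  (`|x + u *: y| + `|x - u *: y|) / 2 - 1 <= @mod_smooth R X u.
Proof.
move=> x1 y1 u0; apply: ub_le_sup; last by exists x, y.
exists u => _ [x' [y' [x'1 [y'1 ->]]]].
have nD : `|x' + u *: y'| <= 1 + u.
  by rewrite -x'1 (le_trans (ler_normD _ _)) // normrZ y'1 mulr1 ger0_norm.
have nB : `|x' - u *: y'| <= 1 + u.
  by rewrite -x'1 (le_trans (ler_normB _ _)) // normrZ y'1 mulr1 ger0_norm.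
lra.
Qed.

(* Use the modulus at x = f/|f|, y = phi, u = c/|f|, and bound |x + u phi|
   from below by F. *)
Lemma norm_sub_le_mod_smooth (mu : R -> R) (F : {linear X -> R^o}) (f phi : X) c :
  (forall u, 0 <= u -> @mod_smooth R X u <= mu u) ->
  norming F f -> f != 0 -> `|phi| = 1 -> 0 < c ->
  `|f - c *: phi| <= `|f| - c * F phi + 2 * `|f| * mu (c / `|f|).
Proof.
move=> smooth_mu [F_contr Ff] f_neq0 phi1 c0.
set a := `|f|; have a0 : 0 < a by rewrite normr_gt0.
set x := a^-1 *: f; set u := c / a.
have u0 : 0 <= u by rewrite divr_ge0 // ltW.
have x1 : `|x| = 1 by rewrite normrZ gtr0_norm ?invr_gt0 // mulVf // gt_eqF.
have rho_le := le_trans (le_mod_smooth x1 phi1 u0) (smooth_mu u u0).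
have F_le : 1 + u * F phi <= `|x + u *: phi|.
  apply: le_trans (contractive_le _ F_contr).
  rewrite linearD !linearZ /= Ff -/a.
  by rewrite [_ *: a]mulVf ?gt_eqF.
have c_eq : c = a * u by rewrite /u mulrCA mulfV ?gt_eqF // mulr1.
have -> : f - c *: phi = a *: (x - u *: phi).
  by rewrite scalerBr scalerA mulfV ?gt_eqF // scale1r scalerA -c_eq.
rewrite normrZ gtr0_norm // c_eq -mulrA.
suff : `|x - u *: phi| <= 1 - u * F phi + 2 * mu u.
  by move=> h; have := ler_wpM2l (ltW a0) h; lra.
lra.
Qed.

End Smoothness.

Section RealInequalities.
Variable R : realType.

Lemma step_length_lb (a c gamma q v : R) :
  0 < a -> 0 < c -> 0 < gamma -> 1 < q -> 0 <= v ->
  c * v <= a * (gamma * powR (c / a) q) ->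
  a * powR (v / gamma) (1 / (q - 1)) <= c.
Proof.
move=> a0 c0 g0 q1 v0; set u := c / a.
have u0 : 0 < u by rewrite divr_gt0.
have c_eq : c = a * u by rewrite /u mulrCA mulfV ?gt_eqF // mulr1.
have pow_q : powR u q = powR u (q - 1) * u.
  by rewrite mulrC mulr_powRB1 ?(ltW u0) // (lt_trans ltr01 q1).
move=> cv_le; have v_le : v <= gamma * powR u (q - 1).
  have -> : gamma * powR u (q - 1) = a * (gamma * powR u q) / c.
    by rewrite pow_q c_eq; field; rewrite (gt_eqF u0) (gt_eqF a0).
  by rewrite ler_pdivlMr // mulrC.
have v_le' : v / gamma <= powR u (q - 1) by rewrite ler_pdivrMr // mulrC.
have e0 : 0 <= 1 / (q - 1) by rewrite divr_ge0 // subr_ge0 ltW.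
have pow_le : powR (v / gamma) (1 / (q - 1)) <= powR (powR u (q - 1)) (1 / (q - 1)).
  by apply: ge0_ler_powR v_le'; rewrite ?nnegrE ?powR_ge0 // divr_ge0 // ltW.
rewrite c_eq ler_pM2l //; apply: le_trans pow_le _.
by rewrite -powRrM mul1r mulfV ?subr_eq0 ?gt_eqF // powRr1 // ltW.
Qed.

Lemma powR1D_le_expR (x d : R) :
  0 <= x -> 0 <= d -> powR (1 + x) d <= expR (d * x).
Proof.
move=> x0 d0; rewrite /powR gt_eqF ?ler_expR ?ler_wpM2l ?le_ln1Dx //; lra.
Qed.

Lemma mul_powR1D_le (a a' x d : R) : 0 <= a -> 0 <= x -> 0 <= d -> 0 <= a' ->
  a' <= a * (1 - d * x) -> a' * powR (1 + x) d <= a.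
Proof.
move=> a0 x0 d0 a'0 a'_le; set E := expR (d * x).
have E0 : 0 <= E := expR_ge0 _.
have E_inv : (1 - d * x) * E <= 1.
  have := expR_ge1Dx (- (d * x)); rewrite expRN => h.
  rewrite -[X in _ <= X](mulVf (lt0r_neq0 (expR_gt0 (d * x)))).
  exact: ler_wpM2r.
apply: le_trans (_ : a' * E <= _); first exact: ler_wpM2l (powR1D_le_expR x0 d0).
apply: le_trans (_ : a * (1 - d * x) * E <= _); first exact: ler_wpM2r.
by rewrite -mulrA ler_piMr.
Qed.

Lemma weight_invariant_step (a a' B c r d : R) :
  0 <= a -> 0 < B -> a <= B * r -> 0 <= c -> 0 <= d -> 0 <= a' ->
  a' <= a - d * c * r -> a' * powR (B + c) d <= a * powR B d.
Proof.
move=> a0 B0 a_le c0 d0 a'0 a'_le; set x := c / B.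
have B_eq : B + c = B * (1 + x) by rewrite mulrDr mulr1 mulrCA mulfV ?gt_eqF ?mulr1.
have ax_le : a * x <= c * r.
  by rewrite mulrCA ler_wpM2l // ler_pdivrMr // mulrC.
have x0 : 0 <= x by rewrite divr_ge0 // ltW.
rewrite B_eq (powRM _ (ltW B0) (addr_ge0 ler01 x0)) mulrCA [a * _]mulrC.
rewrite ler_wpM2l ?powR_ge0 // mul_powR1D_le //.
have : d * (a * x) <= d * (c * r) by rewrite ler_wpM2l.
rewrite mulrBr mulr1 !mulrA [d * a]mulrC; lra.
Qed.

Lemma powR_le_mul1B (z w s p : R) : 0 < z -> 0 <= w -> 0 <= s -> 1 <= p ->
  w <= z * (1 - s) -> powR w p <= powR z p * (1 - s).
Proof.
move=> z0 w0 s0 p1 w_le.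
have s1 : 0 <= 1 - s by rewrite -(pmulr_rge0 _ z0); exact: le_trans w_le.
have [s_eq1|s_neq1] := eqVneq (1 - s) 0.
  move: w_le; rewrite s_eq1 mulr0 => w_le0.
  have -> : w = 0 by apply/eqP; rewrite eq_le w_le0 w0.
  by rewrite powR0 ?mulr0 // gt_eqF // (lt_le_trans ltr01 p1).
apply: le_trans (_ : powR (z * (1 - s)) p <= _).
  by apply: ge0_ler_powR w_le; rewrite ?nnegrE ?(le_trans ler01 p1) // mulr_ge0 // ltW.
have s_pos : 0 < 1 - s <= 1 by rewrite lt_def s_neq1 s1 gerBl.
rewrite [z * _]mulrC [_ * (1 - s)]mulrC; apply: ge1r_powRZ => //; exact: ltW.
Qed.

Lemma inv_recursion_step (y y' K k : R) : 0 <= y -> 0 <= K -> 0 <= k ->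
  y * (1 + k * K) <= 1 -> y' <= y * (1 - K * y) -> y' * (1 + (k + 1) * K) <= 1.
Proof.
move=> y0 K0 k0 y_le y'_le; have kK0 : 0 <= k * K by rewrite mulr_ge0.
apply: le_trans (_ : y * (1 - K * y) * (1 + (k + 1) * K) <= _).
  by rewrite ler_wpM2r // addr_ge0 // mulr_ge0 // addr_ge0.
have Ky0 : 0 <= K * y by rewrite mulr_ge0.
have -> : y * (1 - K * y) * (1 + (k + 1) * K) =
  y * (1 + k * K) + K * y * (1 - y * (1 + k * K)) - (K * y) ^+ 2 by ring.
set Z := y * (1 + k * K); set u := K * y.
have Z0 : 0 <= Z by rewrite mulr_ge0 // addr_ge0.
have [u_le1|u_gt1] := lerP u 1.
  have : 0 <= (1 - Z) * (1 - u) by rewrite mulr_ge0 // subr_ge0.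
  have := sqr_ge0 u; lra.
have : 0 <= Z * (u - 1) by rewrite mulr_ge0 // subr_ge0 ltW.
have : 0 <= (u - 1) * u by rewrite mulr_ge0 ?subr_ge0 ?ltW // (lt_trans ltr01).
rewrite expr2; lra.
Qed.

Lemma ratio_invariant_step (a a' B c r d kap p k : R) :
  0 < a -> 0 < B -> a <= B * r -> 0 < c -> 0 <= a' -> 0 <= d -> 0 <= kap ->
  1 <= p -> 0 <= k -> a' <= a - d * c * r -> a * kap * powR r (p - 1) <= c ->
  powR (a / B) p * (1 + k * (d * kap)) <= 1 ->
  powR (a' / (B + c)) p * (1 + (k + 1) * (d * kap)) <= 1.
Proof.
move=> a0 B0 a_le c0 a'0 d0 kap0 p1 k0 a'_le c_ge inv.
set z := a / B; set y := powR z p.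
have z0 : 0 < z by rewrite divr_gt0.
have z_le : z <= r by rewrite ler_pdivrMr // mulrC.
have r0 : 0 < r := lt_le_trans z0 z_le.
have y_le : a * kap * y <= c * r.
  have y_le_r : y <= powR r (p - 1) * r.
    rewrite mulrC mulr_powRB1 ?(ltW r0) ?(lt_le_trans ltr01 p1) //.
    apply: ge0_ler_powR z_le.
    - exact: le_trans ler01 p1.
    - by rewrite nnegrE ltW.
    - by rewrite nnegrE ltW.
  apply: le_trans (_ : a * kap * (powR r (p - 1) * r) <= _).
    by rewrite ler_wpM2l // mulr_ge0 // ltW.
  by rewrite mulrA ler_wpM2r // ltW.
have w_le : a' / (B + c) <= z * (1 - d * kap * y).
  apply: le_trans (_ : a' / B <= _).
    by rewrite ler_wpM2l // lef_pV2 ?posrE ?addr_gt0 // lerDl ltW.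
  rewrite ler_pdivrMr // /z mulrAC divfK ?gt_eqF //.
  have : d * (a * kap * y) <= d * (c * r) by rewrite ler_wpM2l.
  rewrite mulrBr mulr1 -!mulrA [d * (a * _)]mulrCA; lra.
apply: (inv_recursion_step (y := y)); rewrite ?powR_ge0 ?mulr_ge0 //.
apply: powR_le_mul1B => //.
- by rewrite divr_ge0 // addr_ge0 // ltW.
- by rewrite !mulr_ge0 // powR_ge0.
Qed.

Lemma interpolation_log (u v w beta L d alpha : R) :
  0 < d -> 0 < alpha -> alpha * (1 + d) <= d ->
  u + d * beta <= v + d * w -> u + L <= beta -> w <= beta ->
  u <= (1 - alpha) * v + alpha * w - alpha * L.
Proof.
move=> d0 al0 al_le h_weight h_ratio w_le.
have dw_le : d * w <= d * beta by rewrite ler_pM2l.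
have du_le : d * (u + L) <= d * beta by rewrite ler_pM2l.
have u_le : u <= v by lra.
have h_comb : alpha * ((1 + d) * u + d * L) <= alpha * (v + d * w).
  by rewrite ler_pM2l //; lra.
have : (d - alpha * (1 + d)) * (u - v) <= 0 by rewrite mulr_ge0_le0 ?subr_ge0 // subr_le0.
rewrite -(ler_pM2l d0); nra.
Qed.

Lemma interpolation_bound (a f0 A B Q d alpha p : R) :
  0 <= a -> 0 < f0 -> 0 < A -> A <= B -> 1 <= Q -> 0 <= d -> 0 < p ->
  0 < alpha -> alpha <= d / (1 + d) ->
  a * powR B d <= f0 * powR A d -> powR (a / B) p * Q <= 1 ->
  a / (powR f0 (1 - alpha) * powR A alpha) <= powR Q (- (alpha / p)).
Proof.
move=> a0 f00 A0 AB Q1 d0 p0 al0 al_le h_weight h_ratio.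
have B0 : 0 < B := lt_le_trans A0 AB.
have Q0 : 0 < Q := lt_le_trans ltr01 Q1.
have [->|a_neq0] := eqVneq a 0; first by rewrite mul0r powR_ge0.
have a_gt0 : 0 < a by rewrite lt_def a_neq0.
have d_gt0 : 0 < d.
  rewrite lt_def d0 andbT; apply/eqP => d_eq0; move: al_le; rewrite d_eq0 mul0r; lra.
have h_weight' : ln a + d * ln B <= ln f0 + d * ln A.
  move: h_weight; rewrite -ler_ln ?posrE ?mulr_gt0 ?powR_gt0 //.
  by rewrite !lnM ?posrE ?powR_gt0 // !ln_powR.
have h_ratio' : ln a + ln Q / p <= ln B.
  have := ln_le0 h_ratio.
  rewrite lnM ?posrE ?powR_gt0 ?divr_gt0 // ln_powR ln_div ?posrE // => h.
  rewrite -(ler_pM2l p0) mulrDr mulrCA divff ?gt_eqF // mulr1; nra.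
have w_le : ln A <= ln B by rewrite ler_ln ?posrE.
have al_le' : alpha * (1 + d) <= d by rewrite -ler_pdivlMr ?addr_gt0.
have := interpolation_log d_gt0 al0 al_le' h_weight' h_ratio' w_le.
move=> h_log; rewrite -ler_ln ?posrE ?divr_gt0 ?mulr_gt0 ?powR_gt0 //.
rewrite ln_div ?lnM ?posrE ?mulr_gt0 ?powR_gt0 // !ln_powR.
have -> : - (alpha / p) * ln Q = - (alpha * (ln Q / p)) by ring.
lra.
Qed.

End RealInequalities.

Section DGAConvergence.
Context {R : realType} {X : normedModType R}.
Variables (gamma q t b : R) (star : bool) (D : set X).
Hypotheses (gamma_gt0 : 0 < gamma) (q_gt1 : 1 < q)
  (smooth : forall u, 0 <= u -> @mod_smooth R X u <= gamma * powR u q)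
  (t_gt0 : 0 < t) (b_gt0 : 0 < b) (b_le1 : b <= 1)
  (D_dict : dictionary D).

Local Notation mu := (fun u : R => gamma * powR u q).
Let d := t * (1 - b).
Let kap := powR (t * b / (2 * gamma)) (1 / (q - 1)).
Let p := q / (q - 1).

Let p_ge1 : 1 <= p. Proof. by rewrite ler_pdivlMr ?subr_gt0 // mul1r gerBl. Qed.
Let p_gt0 : 0 < p. Proof. exact: lt_le_trans ltr01 p_ge1. Qed.
Let d_ge0 : 0 <= d. Proof. by rewrite mulr_ge0 ?subr_ge0 // ltW. Qed.
Let kap_ge0 : 0 <= kap. Proof. exact: powR_ge0. Qed.

Lemma DGA_step_bounds fprev fnext Gprev Gnext :
  DGA_step star D t b mu fprev fnext Gprev Gnext -> fprev <> 0 ->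
  exists F phi c, [/\ norming F fprev, D phi, 0 < c,
    fnext = fprev - c *: phi & Gnext = Gprev + c *: phi] /\
    `|fnext| <= `|fprev| - d * c * r_D D F /\
    `|fprev| * kap * powR (r_D D F) (p - 1) <= c.
Proof.
move=> step f_neq0; case: step => [[/f_neq0] //|].
move=> [_ [F [phi [c [[F_norming Dphi Fphi_ge c0] [mu_eq -> ->]]]]]].
exists F, phi, c; split; first by split.
have [D_unit _ D_sym] := D_dict; have [F_contr _] := F_norming.
set a := `|fprev|; set r := r_D D F.
have a0 : 0 < a by rewrite normr_gt0; apply/eqP.
have Fphi_le : F phi <= r := le_r_D D_unit F_contr Dphi.
have r0 : 0 <= r := r_D_ge0 D_unit F_contr D_sym Dphi.
(* This sandwich is all that distinguishes DGA from DGA^*. *)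
have /andP[mu_ge mu_le] : t * b / 2 * c * r <= a * mu (c / a) <= b / 2 * c * F phi.
  have : b / 2 * c * (t * r) <= b / 2 * c * F phi.
    by rewrite ler_wpM2l // !mulr_ge0 // ltW.
  by rewrite mu_eq -/r; case: star => /= ?; apply/andP; split; lra.
split.
  apply: le_trans (norm_sub_le_mod_smooth smooth F_norming _ (D_unit _ Dphi) c0) _.
    exact/eqP.
  rewrite -/a -mulrA.
  have : (1 - b) * c * (t * r) <= (1 - b) * c * F phi.
    by rewrite ler_wpM2l // mulr_ge0 ?subr_ge0 // ltW.
  rewrite /d; lra.
have v_le : c * (t * b * r / 2) <= a * (gamma * powR (c / a) q).
  by have -> : c * (t * b * r / 2) = t * b / 2 * c * r by ring.
have v0 : 0 <= t * b * r / 2 by rewrite divr_ge0 // !mulr_ge0 // ltW.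
have := step_length_lb a0 c0 gamma_gt0 q_gt1 v0 v_le.
have -> : t * b * r / 2 / gamma = t * b / (2 * gamma) * r.
  by field; rewrite gt_eqF.
have -> : p - 1 = 1 / (q - 1) by rewrite /p; field; rewrite subr_eq0 gt_eqF.
by rewrite powRM ?mulrA // divr_ge0 // ?mulr_ge0 // ltW.
Qed.

Variables (f : X) (fs Gs : nat -> X).
Hypotheses (f_neq0 : f <> 0) (f_fin : A1_finite D f)
  (realization : DGA_realization star D t b mu f fs Gs).
Let A := A1_norm D f.

(* B stands for A + c_1 + ... + c_k; the third clause says |G_k|_A1 <= B - A,
   tested against contractive functionals. *)
Definition DGA_invariant k B :=
  [/\ fs k = f - Gs k, A <= B,
    forall F, contractive F -> `|F (Gs k)| <= (B - A) * r_D D F,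
    `|fs k| * powR B d <= `|f| * powR A d &
    powR (`|fs k| / B) p * (1 + k%:R * (d * kap)) <= 1].

Let norm_le_A : `|f| <= A.
Proof.
have [D_unit _ D_sym] := D_dict; have [fs0 _ step] := realization.
have := step 0%N; rewrite fs0.
move=> -[[/f_neq0] //|[_ [F [phi [c [[F_norming Dphi _ _] _]]]]]].
exact: norm_le_A1_norm D_unit D_sym F_norming Dphi f_fin.
Qed.

Let A_gt0 : 0 < A.
Proof. by apply: lt_le_trans norm_le_A; rewrite normr_gt0; apply/eqP. Qed.

Lemma DGA_invariant0 : DGA_invariant 0 A.
Proof.
have [fs0 Gs0 _] := realization.
split; rewrite ?fs0 ?Gs0 ?subr0 //.
  by move=> F _; rewrite linear0 normr0 subrr mul0r.
rewrite mul0r addr0 mulr1; apply: (le_trans (y := powR 1 p)); last by rewrite powR1.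
apply: ge0_ler_powR; first exact: ltW p_gt0.
- by rewrite nnegrE divr_ge0 // (ltW A_gt0).
- by rewrite nnegrE.
- by rewrite ler_pdivrMr ?A_gt0 // mul1r norm_le_A.
Qed.

Lemma DGA_invariantS k B : DGA_invariant k B -> exists B', DGA_invariant k.+1 B'.
Proof.
move=> [fs_eq AB G_le weight ratio].
have [D_unit _ D_sym] := D_dict; have [_ _ step] := realization.
have B0 : 0 < B := lt_le_trans A_gt0 AB.
have [fs_k0|/eqP fs_k_neq0] := eqVneq (fs k) 0.
  case: (step k) => [[_ [fs_next Gs_next]]|[/(_ fs_k0) //]].
  exists B; split; rewrite ?fs_next ?Gs_next -?fs_eq ?normr0 ?mul0r //.
    by rewrite mulr_ge0 // powR_ge0.
  by rewrite powR0 ?mul0r // gt_eqF.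
have [F [phi [c [[F_norming Dphi c0 fs_next Gs_next] [decrease length]]]]] :=
  DGA_step_bounds (step k) fs_k_neq0.
have [F_contr F_fs] := F_norming.
set a := `|fs k| in F_fs decrease length ratio weight *.
set r := r_D D F in decrease length *.
have r0 : 0 <= r := r_D_ge0 D_unit F_contr D_sym Dphi.
have a_le : a <= B * r.
  have := le_A1_norm_r_D D_unit F_contr f_fin r0; have := G_le F F_contr.
  rewrite -F_fs fs_eq linearB /= -/A -/r => h1 h2.
  have := ler_norm (- F (Gs k)); rewrite normrN; nra.
have a0 : 0 < a by rewrite normr_gt0; apply/eqP.
exists (B + c); split.
- by rewrite fs_next Gs_next fs_eq opprD addrA.
- by rewrite (le_trans AB) // lerDl ltW.
- move=> G G_contr; rewrite Gs_next linearD linearZ /=.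
  apply: le_trans (ler_normD _ _) _; rewrite normrM gtr0_norm //.
  have := G_le G G_contr; have := norm_le_r_D D_unit G_contr D_sym Dphi.
  nra.
- apply: le_trans weight.
  exact: weight_invariant_step (ltW a0) B0 a_le (ltW c0) d_ge0 (normr_ge0 _) decrease.
- rewrite -(@natr1 R k).
  exact: ratio_invariant_step a0 B0 a_le c0 (normr_ge0 _) d_ge0 kap_ge0 p_ge1 (ler0n _ _)
    decrease length ratio.
Qed.

Lemma DGA_invariant_holds k : exists B, DGA_invariant k B.
Proof.
elim: k => [|k [B /DGA_invariantS //]]; exists A; exact: DGA_invariant0.
Qed.

Lemma DGA_rate m alpha : 0 < alpha -> alpha <= d / (1 + d) ->
  `|f - Gs m| / (powR `|f| (1 - alpha) * powR A alpha) <=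
    powR (1 + m%:R * (d * kap)) (- (alpha / p)).
Proof.
move=> alpha_gt0 alpha_le; have [B [<- AB _ weight ratio]] := DGA_invariant_holds m.
apply: interpolation_bound weight ratio => //.
- by rewrite normr_gt0; apply/eqP.
- by rewrite lerDl mulr_ge0 // mulr_ge0.
Qed.

End DGAConvergence.

Theorem theorem3p2 (R : realType) (X : completeNormedModType R)
  (gamma q t b : R) :
  0 < gamma -> 1 < q -> q <= 2 ->
  (forall u : R, 0 <= u -> @mod_smooth R X u <= gamma * powR u q) ->
  0 < t -> t <= 1 -> 0 < b -> b <= 1 ->
  let mu := fun u : R => gamma * powR u q in
  let p := q / (q - 1) in
  let c := (1 - b) * powR (b / (2 * gamma)) (1 / (q - 1)) in
  forall (m : nat) (alpha : R), (1 <= m)%N ->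
    0 < alpha -> alpha <= 1 -> alpha <= t * (1 - b) / (1 + t * (1 - b)) ->
    (gammaDGA X false t b mu alpha m
       <= (powR (1 + m%:R * c * powR t p) (- (alpha / p)))%:E)%E /\
    (gammaDGA X true t b mu alpha m
       <= (powR (1 + m%:R * c * powR t p) (- (alpha / p)))%:E)%E.
Proof.
move=> gamma_gt0 q_gt1 _ smooth t_gt0 _ b_gt0 b_le1 mu p c m alpha _
  alpha_gt0 _ alpha_le.
have p_gt0 : 0 < p by rewrite divr_gt0 ?subr_gt0 // (lt_trans ltr01).
have c_tp : c * powR t p = t * (1 - b) * powR (t * b / (2 * gamma)) (1 / (q - 1)).
  have hb : 0 <= b / (2 * gamma) by rewrite divr_ge0 ?mulr_ge0 // ltW.
  rewrite /c -(mulr_powRB1 (ltW t_gt0) p_gt0) -[t * b / _]mulrA.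
  have -> : 1 / (q - 1) = p - 1 by rewrite /p; field; rewrite subr_eq0 gt_eqF.
  rewrite (powRM _ (ltW t_gt0) hb); ring.
suff rate star : (gammaDGA X star t b mu alpha m
    <= (powR (1 + m%:R * c * powR t p) (- (alpha / p)))%:E)%E by split; apply: rate.
apply: ge_ereal_sup => _ [D [f [fs [Gs [D_dict f_neq0 f_fin realization ->]]]]].
rewrite lee_fin -mulrA c_tp.
by have := DGA_rate gamma_gt0 q_gt1 smooth t_gt0 b_gt0 b_le1 D_dict f_neq0 f_fin
  realization m alpha_gt0 alpha_le.
Qed.
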